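(* For every base $\mathcal{B}$, atomic multiset $L$, finite multiset $\Gamma$ of ILL formulae and ILL formula $\varphi$: if $\Gamma\Vdash^L_{\mathcal{B}}\varphi$, then $\Gamma\Vdash^L_{\mathcal{C}}\varphi$ for every base $\mathcal{C}\supseteq\mathcal{B}$.
   Context: Fix a set $\mathbb{A}$ of propositional atoms. ILL formulae: $\phi ::= p\in\mathbb{A} \mid \top \mid 0 \mid 1 \mid \phi\multimap\phi \mid \phi\otimes\phi \mid \phi\,\&\,\phi \mid \phi\oplus\phi \mid\ !\phi$. All multisets are finite; ''$\Gamma,\Delta$'' denotes multiset union. Atomic rules and bases: an atomic sequent is $P\Rightarrow p$ with $P$ a multiset of atoms, $p$ an atom. An atomic box is a multiset of atomic sequents. An atomic rule is a triple $\langle\mathbf{A},\mathbf{S},p\rangle$ with $\mathbf{A}$ a multiset of atomic boxes, $\mathbf{S}$ an atomic box, $p$ an atom. A base is a set of atomic rules. An atom $p$ is persistent in $\mathcal{B}$ if some $\langle\varnothing,\mathbf{S},p\rangle\in\mathcal{B}$ has $\mathbf{S}\neq\varnothing$. Derivability $\vdash_{\mathcal{B}}$: (Ref) $p\vdash_{\mathcal{B}}p$; (App) if $\langle\mathbf{A},\mathbf{S},p\rangle\in\mathcal{B}$ with $\mathbf{A}=\{\mathbf{T}_1,\dots,\mathbf{T}_m\}$, and there are atomic multisets $C_1,\dots,C_n$ ($n\ge m$) and a multiset $D=\{d_{m+1},\dots,d_n\}$ of atoms persistent in $\mathcal{B}$ such that $C_i,Q\vdash_{\mathcal{B}}q$ for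 every $i\le m$ and every $Q\Rightarrow q\in\mathbf{T}_i$, $C_j\vdash_{\mathcal{B}}d_j$ for every $m<j\le n$, and $D,U\vdash_{\mathcal{B}}v$ for every $U\Rightarrow v\in\mathbf{S}$, then $C_1,\dots,C_n\vdash_{\mathcal{B}}p$. Support $\Vdash^L_{\mathcal{B}}$ (base $\mathcal{B}$, atomic multiset $L$), by induction on formulae: $\Vdash^L_{\mathcal{B}}p$ iff $L\vdash_{\mathcal{B}}p$; $\Vdash^L_{\mathcal{B}}\varphi\multimap\psi$ iff $\varphi\Vdash^L_{\mathcal{B}}\psi$; $\Vdash^L_{\mathcal{B}}\varphi\otimes\psi$ iff for all $\mathcal{C}\supseteq\mathcal{B}$, atomic $K$, atoms $p$: if $\varphi,\psi\Vdash^K_{\mathcal{C}}p$ then $\Vdash^{L,K}_{\mathcal{C}}p$; $\Vdash^L_{\mathcal{B}}1$ iff for all $\mathcal{C}\supseteq\mathcal{B}$, $K$, $p$: if $\Vdash^K_{\mathcal{C}}p$ then $\Vdash^{L,K}_{\mathcal{C}}p$; $\Vdash^L_{\mathcal{B}}\varphi\&\psi$ iff $\Vdash^L_{\mathcal{B}}\varphi$ and $\Vdash^L_{\mathcal{B}}\psi$; $\Vdash^L_{\mathcal{B}}\varphi\oplus\psi$ iff for all $\mathcal{C}\supseteq\mathcal{B}$, $K$, $p$: if $\varphi\Vdash^K_{\mathcal{C}}p$ and $\psi\Vdash^K_{\mathcal{C}}p$ then $\Vdash^{L,K}_{\mathcal{C}}p$; $\Vdash^L_{\mathcal{B}}0$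 iff $\Vdash^{L,K}_{\mathcal{B}}p$ for all atoms $p$ and atomic $K$; $\Vdash^L_{\mathcal{B}}\top$ always; $\Vdash^L_{\mathcal{B}}!\varphi$ iff for all $\mathcal{C}\supseteq\mathcal{B}$, $K$, $p$: if (for all $\mathcal{D}\supseteq\mathcal{C}$, $\Vdash^{\varnothing}_{\mathcal{D}}\varphi$ implies $\Vdash^K_{\mathcal{D}}p$) then $\Vdash^{L,K}_{\mathcal{C}}p$. For nonempty multisets: $\Vdash^L_{\mathcal{B}}\Gamma,\Delta$ iff $L=K,M$ with $\Vdash^K_{\mathcal{B}}\Gamma$ and $\Vdash^M_{\mathcal{B}}\Delta$. For a nonempty antecedent written $!\Delta,\Theta$, where $!\Delta$ collects the formulae with top-level connective $!$ (with $\Delta$ the formulae under those $!$) and $\Theta$ contains none: $!\Delta,\Theta\Vdash^L_{\mathcal{B}}\varphi$ iff for all $\mathcal{C}\supseteq\mathcal{B}$ and atomic $K$, if $\Vdash^{\varnothing}_{\mathcal{C}}\delta$ for every $\delta\in\Delta$ and $\Vdash^K_{\mathcal{C}}\Theta$ then $\Vdash^{L,K}_{\mathcal{C}}\varphi$ (when $\Theta$ is empty, $K$ is empty). An empty antecedent: $\varnothing\Vdash^L_{\mathcal{B}}\varphi$ means $\Vdash^L_{\mathcal{B}}\varphi$. *)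

From Stdlib Require Import List Permutation.
Import ListNotations.
Set Implicit Arguments.

Section ILL.
Variable Atom : Type.

Inductive formula : Type :=
| Atm  : Atom -> formula
| Top  : formula
| Zero : formula
| One  : formula
| Imp  : formula -> formula -> formula
| Tens : formula -> formula -> formula
| With : formula -> formula -> formula
| Plus : formula -> formula -> formula
| Bang : formula -> formula.

(* Finite multisets are represented by lists, considered up to Permutation. *)
Definition sequent := (list Atom * Atom)%type.
Definition box := list sequent.
Definition rule := (list box * box * Atom)%type.
Definition base := rule -> Prop.

Definition ext (B C : base) : Prop := forall r, B r -> C r.

Definition persistent (B : base) (p : Atom) : Prop :=
  exists S : box, B ([], S, p) /\ S <> [].

(* Derivability in a base.  In (App): CA pairs each box T_i of A with its
   context C_i; CD pairs each extra context C_j with its persistent atom d_j. *)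
Inductive deriv (B : base) : list Atom -> Atom -> Prop :=
| d_ref (p : Atom) : deriv B [p] p
| d_app (A : list box) (S : box) (p : Atom)
        (CA : list (box * list Atom)) (CD : list (list Atom * Atom)) (L : list Atom) :
    B (A, S, p) ->
    map fst CA = A ->
    (forall T C, In (T, C) CA -> forall Q q, In (Q, q) T -> deriv B (C ++ Q) q) ->
    (forall C d, In (C, d) CD -> persistent B d /\ deriv B C d) ->
    (forall U v, In (U, v) S -> deriv B (map snd CD ++ U) v) ->
    Permutation L (concat (map snd CA) ++ concat (map fst CD)) ->
    deriv B L p.

(* Support of a nonempty multiset Θ (each formula given by its support
   predicate) at K: K = K1,...,Kn with K_i supporting θ_i.  Empty Θ: K empty. *)
Fixpoint multi (fs : list (base -> list Atom -> Prop)) (C : base) (K : list Atom) : Prop :=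
  match fs with
  | [] => K = []
  | [f] => f C K
  | f :: fs' => exists K1 K2, Permutation K (K1 ++ K2) /\ f C K1 /\ multi fs' C K2
  end.

(* Support of a nonempty antecedent !Δ,Θ.  Each antecedent formula is given by
   (is_bang, support predicate of the formula under ! if is_bang, else of the
   formula itself). *)
Definition ante (Gs : list (bool * (base -> list Atom -> Prop))) (B : base)
  (L : list Atom) (goal : base -> list Atom -> Prop) : Prop :=
  forall (C : base) (K : list Atom), ext B C ->
    (forall f, In (true, f) Gs -> f C []) ->
    multi (map snd (filter (fun bf => negb (fst bf)) Gs)) C K ->
    goal C (L ++ K).

Fixpoint sup (phi : formula) (B : base) (L : list Atom) {struct phi} : Prop :=
  match phi with
  | Atm p => deriv B L p
  | Top => True
  | Zero => forall (K : list Atom) (p : Atom), deriv B (L ++ K) p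
  | One => forall (C : base) (K : list Atom) (p : Atom),
      ext B C -> deriv C K p -> deriv C (L ++ K) p
  | Imp a b =>
      ante [match a with Bang d => (true, sup d) | _ => (false, sup a) end] B L (sup b)
  | Tens a b =>
      forall (C : base) (K : list Atom) (p : Atom), ext B C ->
        ante [match a with Bang d => (true, sup d) | _ => (false, sup a) end;
              match b with Bang d => (true, sup d) | _ => (false, sup b) end]
             C K (fun D M => deriv D M p) ->
        deriv C (L ++ K) p
  | With a b => sup a B L /\ sup b B L
  | Plus a b =>
      forall (C : base) (K : list Atom) (p : Atom), ext B C ->
        ante [match a with Bang d => (true, sup d) | _ => (false, sup a) end]
             C K (fun D M => deriv D M p) ->
        ante [match b with Bang d => (true, sup d) | _ => (false, sup b) end]
             C K (fun D M => deriv D M p) ->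
        deriv C (L ++ K) p
  | Bang a =>
      forall (C : base) (K : list Atom) (p : Atom), ext B C ->
        (forall D : base, ext C D -> sup a D [] -> deriv D K p) ->
        deriv C (L ++ K) p
  end.

Definition view (phi : formula) : bool * (base -> list Atom -> Prop) :=
  match phi with Bang d => (true, sup d) | _ => (false, sup phi) end.

Definition supports (B : base) (L : list Atom) (Gamma : list formula) (phi : formula) : Prop :=
  match Gamma with
  | [] => sup phi B L
  | _ => ante (map view Gamma) B L (sup phi)
  end.

End ILL.

(* Every clause of support either quantifies over all extensions of the base,
   and is then preserved by passing to an extension because ⊇ is transitive,
   or reduces to derivability, which is preserved because a derivation in B
   only applies rules of B. *)
From Stdlib Require Import List Permutation.
Import ListNotations.

Section Monotonicity.
Variable Atom : Type.

Lemma ext_trans (B C D : base Atom) : ext B C -> ext C D -> ext B D.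
Proof. unfold ext; auto. Qed.

Lemma persistent_mono (B C : base Atom) (p : Atom) :
  ext B C -> persistent B p -> persistent C p.
Proof. intros E [S [HS Hne]]. exists S; auto. Qed.

(* A structural fixpoint rather than [deriv_ind]: the premises about the
   persistent atoms sit under a conjunction, for which the generated induction
   principle provides no induction hypothesis. *)
Fixpoint deriv_mono (B C : base Atom) (E : ext B C) (L : list Atom) (p : Atom)
  (D : deriv B L p) {struct D} : deriv C L p :=
  match D in deriv _ L p return deriv C L p with
  | d_ref _ p => d_ref C p
  | @d_app _ _ _ _ _ _ _ _ HB Hfst HA HD HS Hperm =>
      @d_app Atom C _ _ _ _ _ _ (E _ HB) Hfst
        (fun T K Hin Q q Hq => deriv_mono _ _ E _ _ (HA T K Hin Q q Hq))
        (fun K d Hin =>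
           match HD K d Hin with
           | conj Hpers Hder =>
               conj (persistent_mono _ _ _ E Hpers) (deriv_mono _ _ E _ _ Hder)
           end)
        (fun U v Hin => deriv_mono _ _ E _ _ (HS U v Hin))
        Hperm
  end.

Lemma ante_mono (Gs : list (bool * (base Atom -> list Atom -> Prop)))
  (B C : base Atom) (L : list Atom) (goal : base Atom -> list Atom -> Prop) :
  ext B C -> ante Gs B L goal -> ante Gs C L goal.
Proof.
  unfold ante; intros E H D K ECD.
  apply H; eapply ext_trans; eauto.
Qed.

Lemma sup_mono (phi : formula Atom) :
  forall (B C : base Atom) (L : list Atom), ext B C -> sup phi B L -> sup phi C L.
Proof.
  induction phi; simpl; intros B C L E H.
  - eapply deriv_mono; eauto.
  - exact I.
  - intros; eapply deriv_mono; eauto.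
  - intros; apply H; eauto using ext_trans.
  - eapply ante_mono; eauto.
  - intros; apply H; eauto using ext_trans.
  - destruct H; split; eauto.
  - intros; apply H; eauto using ext_trans.
  - intros; apply H; eauto using ext_trans.
Qed.

End Monotonicity.

Theorem lemma3 (Atom : Type) (B : base Atom) (L : list Atom)
  (Gamma : list (formula Atom)) (phi : formula Atom) :
  supports B L Gamma phi -> forall C : base Atom, ext B C -> supports C L Gamma phi.
Proof.
  intros H C E.
  destruct Gamma as [| gamma Gamma]; simpl in *.
  - eapply sup_mono; eauto.
  - eapply ante_mono; eauto.
Qed.
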